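(* A distributional factorization satisfying the DIGM principle does not guarantee the RIGM principle. Precisely: there exist a number of agents $N$, finite action sets, a distributional factorization $\Phi$, per-agent return distributions $[Z_i(\tau_i,u_i)]_{i=1}^N$ and a risk metric $\psi_\alpha$ (which can be taken to be a Value-at-Risk metric $\mathrm{VaR}_\alpha$) such that $[Z_i]_{i=1}^N$ satisfy DIGM for $Z_{jt}(\boldsymbol\tau,\boldsymbol u)=\Phi(Z_1(\tau_1,u_1),\dots,Z_N(\tau_N,u_N))$, but $[Z_i]_{i=1}^N$ do not satisfy RIGM for $Z_{jt}$ with risk metric $\psi_\alpha$.
   Context: There are $N$ agents; agent $i$ has observation history $\tau_i$ and a finite action set $U_i$; $\boldsymbol\tau=(\tau_1,\dots,\tau_N)$, $\boldsymbol u=(u_1,\dots,u_N)$. Return distributions are real random variables. For a real random variable $Z$ with CDF $F_Z$, its quantile function is $\theta_Z(\omega)=\inf\{z\in\mathbb{R}:\omega\le F_Z(z)\}$, $\omega\in(0,1]$, and $\mathrm{VaR}_\alpha(Z)=\theta_Z(\alpha)$. RIGM: given a risk metric $\psi_\alpha$, per-agent return distributions $[Z_i(\tau_i,u_i)]$ satisfy RIGM for a joint return distribution $Z_{jt}(\boldsymbol\tau,\boldsymbol u)$ with $\psi_\alpha$ under $\boldsymbol\tau$ if $\arg\max_{\boldsymbol u}\psi_\alpha[Z_{jt}(\boldsymbol\tau,\boldsymbol u)]=(\arg\max_{u_1}\psi_\alpha[Z_1(\tau_1,u_1)],\dots,\arg\max_{u_N}\psi_\alpha[Z_N(\tau_N,u_N)])$.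 DIGM is RIGM with $\psi_\alpha$ replaced by the expectation $\mathbb{E}$. Argmax sets are assumed to be singletons (ties broken by smallest index). *)

From HB Require Import structures.
From mathcomp Require Import all_boot all_order all_algebra.
From mathcomp Require Import all_classical all_reals all_analysis.
Set Implicit Arguments. Unset Strict Implicit. Unset Printing Implicit Defensive.
Import Order.TTheory GRing.Theory Num.Theory.
Local Open Scope classical_set_scope.
Local Open Scope ring_scope.

Section Defs.
Context {d : measure_display} {Omega : measurableType d} {R : realType}.
Variable P : probability Omega R.

Definition cdf (Z : {RV P >-> R}) (z : R) : R := fine (P [set w | Z w <= z]).

Definition quantile (Z : {RV P >-> R}) (om : R) : R :=
  inf [set z : R | om <= cdf Z z].

Definition VaR (alpha : R) (Z : {RV P >-> R}) : R := quantile Z alpha.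

Definition metric_VaR (alpha : R) : {RV P >-> R} -> \bar R :=
  fun Z => (VaR alpha Z)%:E.
Definition metric_E : {RV P >-> R} -> \bar R := fun Z => ('E_P[Z])%E.

End Defs.

Definition argmax {A : Type} {R : realType} (f : A -> \bar R) : set A :=
  [set a | forall b, (f b <= f a)%E].

(* Individual-Global-Max consistency for a metric psi, under a fixed joint
   history tau: agents i : 'I_N, actions of agent i : 'I_(m i).+1,
   joint actions : forall i, 'I_(m i).+1. *)
Definition IGM_under {d} {Omega : measurableType d} {R : realType}
  (P : probability Omega R) (N : nat) (m : 'I_N -> nat)
  (H : 'I_N -> Type) (tau : forall i, H i)
  (psi : {RV P >-> R} -> \bar R)
  (Z : forall i : 'I_N, H i -> 'I_(m i).+1 -> {RV P >-> R})
  (Zjt : (forall i, H i) -> (forall i : 'I_N, 'I_(m i).+1) -> {RV P >-> R}) : Prop :=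
  argmax (fun u => psi (Zjt tau u)) =
  [set u | forall i : 'I_N, argmax (fun ui => psi (Z i (tau i) ui)) (u i)].

Definition argmax_singleton {A : Type} {R : realType} (f : A -> \bar R) : Prop :=
  exists a, argmax f = [set a].
Arguments metric_E {d Omega R} P _.
Arguments metric_VaR {d Omega R} P alpha _.

From Pilot Require Import Defs.
From HB Require Import structures.
From mathcomp Require Import all_boot all_order all_algebra.
From mathcomp Require Import all_classical all_reals all_analysis.
From mathcomp Require Import ring lra.
Import Order.TTheory GRing.Theory Num.Theory.
Local Open Scope classical_set_scope.
Local Open Scope ring_scope.

(* One agent with two actions whose returns are the constants 0 and 1, so
   both the expectation and the VaR prefer action 1.  The factorization turns
   a return u into 1 + u G, where G is a fair coin bet paying 9 or -1.
   Action 1 raises the mean of the joint return from 1 to 5, but it puts half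
   of the mass at 0, so it lowers VaR_{1/2} from 1 to 0: the joint greedy
   action agrees with the individual one for the expectation and not for the
   VaR. *)

Section quantile.
Context d (Omega : measurableType d) (R : realType) (P : probability Omega R).

Lemma quantile_eq (Z : {RV P >-> R}) (alpha c : R) :
  (forall z, (alpha <= Defs.cdf Z z) = (c <= z)) -> quantile Z alpha = c.
Proof.
move=> cdfE; rewrite /quantile.
have -> : [set z | alpha <= Defs.cdf Z z] = [set` `[c, +oo[].
  by apply/seteqP; split => z /=; rewrite in_itv /= andbT cdfE.
by rewrite inf_itv.
Qed.

Lemma VaR_cst (alpha c : R) : 0 < alpha <= 1 ->
  VaR alpha (cst c : {RV P >-> R}) = c.
Proof.
case/andP => alpha_gt0 alpha_le1; apply: quantile_eq => z; rewrite /Defs.cdf /=.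
have [cz|zc] := leP c z.
  have -> : [set _ : Omega | true] = setT by apply/seteqP; split.
  by rewrite probability_setT.
have -> : [set _ : Omega | false] = set0 by apply/seteqP; split.
by rewrite measure0 /= leNgt alpha_gt0.
Qed.

End quantile.

Lemma measurable_bool_fun d (T : measurableType d) (f : bool -> T) :
  measurable_fun setT f.
Proof. by []. Qed.

Definition bool_mfun {R : realType} (f : bool -> R) : {mfun bool >-> R} :=
  mfun_Sub (mem_set (@measurable_bool_fun _ _ f)).

Section bernoulli.
Context {R : realType} (p : R).
Hypothesis p01 : 0 <= p <= 1.
Local Notation P := (bernoulli_prob p).

Lemma integrable_bernoulli (X : {RV P >-> R}) : P.-integrable setT (EFin \o X).
Proof.
apply/integrableP; split; first by [].
by rewrite integral_bernoulli_prob //= -!EFinM -EFinD ltry.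
Qed.

Definition two_point (lo hi : R) : {RV P >-> R} :=
  bool_mfun (fun b => if b then hi else lo).

Lemma expectation_two_point lo hi :
  ('E_P[two_point lo hi] = (p * hi + (1 - p) * lo)%:E)%E.
Proof.
have pos_sub_neg (r : R) : Num.max r 0 - Num.max (- r) 0 = r.
  have := oppr_min r 0; rewrite oppr0 => <-.
  by rewrite opprK addr_max_min addr0.
rewrite unlock integralE !integral_bernoulli_prob // !funeposE !funenegE /=.
rewrite -!EFin_max -!EFinN -!EFinM -!EFinD; congr EFin.
rewrite -[in RHS](pos_sub_neg hi) -[in RHS](pos_sub_neg lo) /unstable.onem.
by ring.
Qed.

Lemma bernoulli_prob_false : (P : probability bool R) [set false] = (1 - p)%:E.
Proof.
rewrite -[LHS]/(bernoulli_prob p [set false]) bernoulli_probE //.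
by rewrite !diracE memNset // mem_set //= mule0 add0e mule1.
Qed.

Lemma cdf_two_point lo hi z : lo <= hi ->
  Defs.cdf (two_point lo hi) z =
  if z < lo then 0 else if z < hi then 1 - p else 1.
Proof.
move=> lo_hi; rewrite /Defs.cdf.
have [z_lo|lo_z] := ltP z lo.
  have -> : [set w | two_point lo hi w <= z] = set0.
    by apply/seteqP; split => -[] //=;
      rewrite leNgt ?z_lo ?(lt_le_trans z_lo lo_hi).
  by rewrite measure0.
have [z_hi|hi_z] := ltP z hi.
  have -> : [set w | two_point lo hi w <= z] = [set false].
    by apply/seteqP; split => -[] //=; rewrite ?lo_z // leNgt z_hi.
  by rewrite bernoulli_prob_false.
have -> : [set w | two_point lo hi w <= z] = setT.
  by apply/seteqP; split => -[] //=; rewrite ?hi_z ?lo_z.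
by rewrite probability_setT.
Qed.

Lemma VaR_two_point (alpha lo hi : R) : lo <= hi -> 0 < alpha <= 1 - p ->
  VaR alpha (two_point lo hi) = lo.
Proof.
move=> lo_hi /andP[alpha_gt0 alpha_le]; apply: quantile_eq => z.
rewrite cdf_two_point //.
have [_|_] := ltP z lo; first by rewrite leNgt alpha_gt0.
have [_|_] := ltP z hi; first by rewrite alpha_le.
by case/andP: p01 => p_ge0 _; rewrite (le_trans alpha_le) // lerBlDr lerDl.
Qed.

End bernoulli.

Section argmax.
Context {R : realType}.

Lemma argmax_set1 (A : Type) (f : A -> \bar R) (a : A) :
  (forall b, b <> a -> (f b < f a)%E) -> argmax f = [set a].
Proof.
move=> f_lt; apply/seteqP; split => [b /= b_max | _ -> b /=].
  by apply: contrapT => /f_lt; rewrite ltNge b_max.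
by have [->|/f_lt/ltW] := pselect (b = a).
Qed.

Lemma ord2_cases (k : 'I_2) : k = ord0 \/ k = ord_max.
Proof. by case: k => -[|[|//]] k_lt; [left|right]; apply: val_inj. Qed.

Lemma argmax_ord2_max (f : 'I_2 -> \bar R) :
  (f ord0 < f ord_max)%E -> argmax f = [set ord_max].
Proof. by move=> f_lt; apply: argmax_set1 => k; case: (ord2_cases k) => ->. Qed.

Lemma argmax_ord2_0 (f : 'I_2 -> \bar R) :
  (f ord_max < f ord0)%E -> argmax f = [set ord0].
Proof. by move=> f_lt; apply: argmax_set1 => k; case: (ord2_cases k) => ->. Qed.

Lemma argmax_ord1_fun {T : Type} (f : T -> \bar R) (a : T) :
  argmax f = [set a] ->
  argmax (fun u : 'I_1 -> T => f (u ord0)) = [set fun _ => a].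
Proof.
move=> fa; apply/seteqP; split => [u /= u_max | _ -> v /=].
  have : argmax f (u ord0) by move=> c; exact: u_max (fun _ => c).
  by rewrite fa => /= u0; apply/funext => i; rewrite (ord1 i).
have a_max : argmax f a by rewrite fa.
exact: a_max.
Qed.

Lemma argmax_prod_set1 {I : Type} {A : I -> Type} {g : forall i, A i -> \bar R}
    {a : forall i, A i} :
  (forall i, argmax (g i) = [set a i]) ->
  [set u : forall i, A i | forall i, argmax (g i) (u i)] = [set a].
Proof.
move=> ga; apply/seteqP; split => [u /= u_max | _ -> i /=]; last by rewrite ga.
by apply: functional_extensionality_dep => i; have := u_max i; rewrite ga.
Qed.

End argmax.

Section counterexample.
Variable R : realType.
Local Notation P := (bernoulli_prob (2^-1 : R)).

Definition deterministic_return (i : 'I_1) (_ : unit) (ui : 'I_2) :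
  {RV P >-> R} := cst ui%:R.

Definition coin_bet (Zs : 'I_1 -> {RV P >-> R}) : {RV P >-> R} :=
  bool_mfun (fun w => 1 + Zs ord0 w * (if w then 9 else -1)).

Let half01 : 0 <= (2^-1 : R) <= 1.
Proof. by apply/andP; split; lra. Qed.

Lemma coin_betE (u : 'I_1 -> 'I_2) :
  coin_bet (fun i => deterministic_return i tt (u i)) =
  two_point (2^-1) (1 - (u ord0)%:R) (1 + 9 * (u ord0)%:R).
Proof. by apply/mfuneqP => -[] /=; ring. Qed.

Lemma metric_E_coin_bet (u : 'I_1 -> 'I_2) :
  metric_E P (coin_bet (fun i => deterministic_return i tt (u i))) =
  (1 + 4 * (u ord0)%:R)%:E.
Proof.
by rewrite /metric_E coin_betE expectation_two_point //; congr EFin; field.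
Qed.

Lemma metric_VaR_coin_bet (u : 'I_1 -> 'I_2) :
  metric_VaR P 2^-1 (coin_bet (fun i => deterministic_return i tt (u i))) =
  (1 - (u ord0)%:R)%:E.
Proof.
rewrite /metric_VaR coin_betE VaR_two_point //.
- by have : 0 <= (u ord0)%:R :> R by []; lra.
- by apply/andP; split; lra.
Qed.

Lemma argmax_metric_E_coin_bet :
  argmax (fun u =>
    metric_E P (coin_bet (fun i => deterministic_return i tt (u i)))) =
  [set fun _ => ord_max].
Proof.
rewrite (funext metric_E_coin_bet).
apply: (argmax_ord1_fun (fun k : 'I_2 => (1 + 4 * k%:R)%:E)).
by apply: argmax_ord2_max; rewrite lte_fin /=; lra.
Qed.

Lemma argmax_metric_VaR_coin_bet :
  argmax (fun u =>
    metric_VaR P 2^-1 (coin_bet (fun i => deterministic_return i tt (u i)))) =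
  [set fun _ => ord0].
Proof.
rewrite (funext metric_VaR_coin_bet).
apply: (argmax_ord1_fun (fun k : 'I_2 => (1 - k%:R)%:E)).
by apply: argmax_ord2_0; rewrite lte_fin /=; lra.
Qed.

Lemma argmax_metric_E_deterministic_return i :
  argmax (fun ui => metric_E P (deterministic_return i tt ui)) = [set ord_max].
Proof.
by apply: argmax_ord2_max; rewrite /metric_E !expectation_cst lte_fin ltr01.
Qed.

Lemma argmax_metric_VaR_deterministic_return i :
  argmax (fun ui => metric_VaR P 2^-1 (deterministic_return i tt ui)) =
  [set ord_max].
Proof.
apply: argmax_ord2_max.
by rewrite /metric_VaR !VaR_cst ?lte_fin ?ltr01 //; apply/andP; split; lra.
Qed.

End counterexample.

Theorem theorem2 (R : realType) :
  exists (d : measure_display) (Omega : measurableType d) (P : probability Omega R)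
    (N : nat) (m : 'I_N -> nat) (H : 'I_N -> Type) (tau : forall i, H i)
    (Phi : ('I_N -> {RV P >-> R}) -> {RV P >-> R})
    (Z : forall i : 'I_N, H i -> 'I_(m i).+1 -> {RV P >-> R})
    (alpha : R),
    let Zjt := fun (t : forall i, H i) (u : forall i : 'I_N, 'I_(m i).+1) =>
                 Phi (fun i => Z i (t i) (u i)) in
    0 < alpha <= 1 /\
        (forall i (ui : 'I_(m i).+1), P.-integrable setT (EFin \o Z i (tau i) ui)) /\
        (forall u : forall i : 'I_N, 'I_(m i).+1, P.-integrable setT (EFin \o Zjt tau u)) /\
        (* standing assumption: all relevant argmax sets are singletons *)
        (forall i : 'I_N, argmax_singleton (fun ui => metric_E P (Z i (tau i) ui)) /\
                          argmax_singleton (fun ui => metric_VaR P alpha (Z i (tau i) ui))) /\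
        (argmax_singleton (fun u => metric_E P (Zjt tau u)) /\
        argmax_singleton (fun u => metric_VaR P alpha (Zjt tau u))) /\
        (* DIGM holds *)
        IGM_under tau (metric_E P) Z Zjt /\
        (* RIGM fails for psi_alpha = VaR_alpha *)
        ~ IGM_under tau (metric_VaR P alpha) Z Zjt.
Proof.
exists _, bool, (bernoulli_prob (2^-1 : R)), 1%N, (fun _ => 1%N), (fun _ => unit),
  (fun _ => tt), (@coin_bet R), (@deterministic_return R), 2^-1 => Zjt.
have half01 : 0 <= (2^-1 : R) <= 1 by apply/andP; split; lra.
split; first by apply/andP; split; lra.
split; first by move=> *; exact: integrable_bernoulli.
split; first by move=> *; exact: integrable_bernoulli.
split.
  move=> i; split; exists ord_max.
    exact: argmax_metric_E_deterministic_return.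
  exact: argmax_metric_VaR_deterministic_return.
split.
  split; first by exists (fun _ => ord_max); exact: argmax_metric_E_coin_bet.
  by exists (fun _ => ord0); exact: argmax_metric_VaR_coin_bet.
split.
  rewrite /IGM_under argmax_metric_E_coin_bet.
  by rewrite (argmax_prod_set1 (@argmax_metric_E_deterministic_return R)).
rewrite /IGM_under argmax_metric_VaR_coin_bet.
rewrite (argmax_prod_set1 (@argmax_metric_VaR_deterministic_return R)).
move=> eq0max.
have : [set fun _ : 'I_1 => @ord0 1] (fun _ => ord0) by [].
by rewrite eq0max => /(congr1 (fun u => val (u ord0))).
Qed.
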